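(* Let $w$ be a planar word in $\Sigma_{0,1,n}$ and let $k\in\{1,\dots,n\}$. Then: (i) $w$ is squarefree, i.e. its reduced word has no two consecutive equal letters; (ii) $w\notin(\overline t_n\overline t_{n-1}\cdots\overline t_{k+1}t_k{\star})\setminus\{(t_{k+1}\cdots t_n)^{-1}t_k(t_{k+1}\cdots t_n)\}$; (iii) $w\notin(t_1t_2\cdots t_{k-1}\overline t_k{\star})$.
   Context: $\Sigma_{0,1,n}$ is the free group on $t_1,\dots,t_n$; write $\overline t_k=t_k^{-1}$. For $v\in\Sigma_{0,1,n}$, $(v{\star})$ is the set of elements whose reduced word begins with the reduced word of $v$. Empty products equal $1$. Let $A$ be the set of formal symbols $\overline z_1,t_1,\overline t_1,\dots,t_n,\overline t_n,z_1$, totally ordered by $\overline z_1<t_1<\overline t_1<\dots<t_n<\overline t_n<z_1$. For a reduced word $a_1\cdots a_m$ (with $a_i\in\{t_k^{\pm1}\}$), its Whitehead expansion is $(c_1,\dots,c_{2m+2})=(\overline z_1,a_1,\overline a_1,\dots,a_m,\overline a_m,z_1)$. Two $2$-element sets $\{a,b\},\{c,d\}$ of integers are nested if $a,b,c,d$ are distinct and either both or neither of $c,d$ lie strictly between $a$ and $b$. A family of such sets is nested if every two distinct members are nested. A $2M$-tuple $(c_1,\dots,c_{2M})$ of elements of $A$ is planar if there is a permutation $\pi$ of $\{1,\dots,2M\}$ with three properties: - $\pi(i)<\pi(j)$ implies $c_i\le c_j$; - the family $\{\{\pi(2i-1),\pi(2i)\}\}_{1\le i\le M}$ is nested; - the family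 $\{\{\pi(2i),\pi(2i+1)\}\}_{1\le i\le M-1}$ is nested. $w$ is a planar word if the Whitehead expansion of its reduced word is planar. *)

From mathcomp Require Import all_boot.
Set Implicit Arguments. Unset Strict Implicit. Unset Printing Implicit Defensive.

(* A letter of the free group Sigma_{0,1,n}: (k, false) is t_k, (k, true) is
   \overline t_k = t_k^{-1}. *)
Definition letter := (nat * bool)%type.

Definition T (k : nat) : letter := (k, false).
Definition Tbar (k : nat) : letter := (k, true).

Definition linv (a : letter) : letter := (a.1, ~~ a.2).

Definition valid_letter (n : nat) (a : letter) : bool := (1 <= a.1 <= n).

(* Elements of
   the free group Sigma_{0,1,n} are in bijection with reduced words over the
   valid letters; we represent an element by its reduced word. *)
Definition reduced (w : seq letter) : bool :=
  sorted (fun a b => b != linv a) w.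

Definition squarefree (w : seq letter) : Prop :=
  forall i, i.+1 < size w -> nth (0, false) w i != nth (0, false) w i.+1.

Inductive sym := Zbar1 | Lt of letter | Z1.

(* Rank realising the total order zbar_1 < t_1 < tbar_1 < ... < t_n < tbar_n < z_1
   (on symbols whose letters have index in 1..n). *)
Definition sym_rank (n : nat) (x : sym) : nat :=
  match x with
  | Zbar1 => 0
  | Lt (k, false) => (2 * k).-1
  | Lt (k, true) => 2 * k
  | Z1 => (2 * n).+1
  end.

Definition sym_le (n : nat) (x y : sym) : bool := sym_rank n x <= sym_rank n y.

Definition whitehead (w : seq letter) : seq sym :=
  Zbar1 :: flatten [seq [:: Lt a; Lt (linv a)] | a <- w] ++ [:: Z1].

Definition strictly_between (a b c : nat) : bool := (minn a b < c < maxn a b).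

Definition nested (a b c d : nat) : bool :=
  uniq [:: a; b; c; d] &&
  (strictly_between a b c == strictly_between a b d).

(* The permutation pi of
   {0,...,2M-1} is given by the sequence s with pi(i) = nth 0 s i; the
   paper's 1-based pairs {pi(2i-1),pi(2i)} (1<=i<=M) become
   {pi(2i),pi(2i+1)} (0<=i<M), and {pi(2i),pi(2i+1)} (1<=i<=M-1) become
   {pi(2i+1),pi(2i+2)} (0<=i<M-1). *)
Definition planar (n : nat) (c : seq sym) : Prop :=
  ~~ odd (size c) /\
  let M := (size c)./2 in
  exists s : seq nat,
    [/\ perm_eq s (iota 0 (size c)),
        (forall i j, i < size c -> j < size c ->
           nth 0 s i < nth 0 s j -> sym_le n (nth Z1 c i) (nth Z1 c j)),
        (forall i j, i < M -> j < M -> i != j ->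
           nested (nth 0 s (2 * i)) (nth 0 s (2 * i).+1)
                  (nth 0 s (2 * j)) (nth 0 s (2 * j).+1)) &
        (forall i j, i.+1 < M -> j.+1 < M -> i != j ->
           nested (nth 0 s (2 * i).+1) (nth 0 s (2 * i).+2)
                  (nth 0 s (2 * j).+1) (nth 0 s (2 * j).+2))].

Definition planar_word (n : nat) (w : seq letter) : Prop :=
  planar n (whitehead w).

Definition tbar_down (n k : nat) : seq letter :=
  [seq Tbar i | i <- rev (iota k.+1 (n - k))].
Definition t_up (n k : nat) : seq letter :=
  [seq T i | i <- iota k.+1 (n - k)].
Definition t_upto (k : nat) : seq letter :=
  [seq T i | i <- iota 1 k.-1].

From mathcomp Require Import all_boot zify.

(* Write m for the length of the reduced word w = a_0 ... a_{m-1} and c for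
   its Whitehead expansion, indexed 0 .. 2m+1: position 0 is zbar_1, position
   2i+1 carries a_i, position 2i+2 carries abar_i and position 2m+1 is z_1.
   Entries are compared through their rank in A (0 for zbar_1, 2k-1 for
   t_k, 2k for tbar_k, 2n+1 for z_1), and planarity provides an injection p
   of positions into a line, monotone in the rank, such that the "upper"
   arcs {2i, 2i+1} do not cross and the "lower" arcs {2i+1, 2i+2} do not
   cross.

   The engine of every part is a trapping argument: once the image of the
   next position lies strictly inside an arc, non-crossing forces the image
   of the position after it inside the same arc, hence its rank between the
   two ranks of the arc; this pins down the next letter, and the new letter
   puts the next position inside a new arc.  The walk cannot go on forever:
   it reaches z_1 (whose rank 2n+1 is too big) or zbar_1 (rank 0 too small).
   (i) A square a a traps the walk to the right or to the left.
   (ii) After the prefix tbar_n ... tbar_{k+1} t_k the walk forces the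
   letters t_{k+1}, ..., t_n and then the end of the word.
   (iii) After the prefix t_1 ... t_{k-1} tbar_k the walk forces
   tbar_{k-1}, ..., tbar_1 and then an impossible letter. *)

Set Implicit Arguments.
Unset Strict Implicit.
Unset Printing Implicit Defensive.

Definition letter_rank (a : letter) : nat :=
  if a.2 then 2 * a.1 else (2 * a.1).-1.

Lemma sym_rank_Lt n a : sym_rank n (Lt a) = letter_rank a.
Proof. by case: a => k []. Qed.

Lemma linvK : involutive linv.
Proof. by case=> k []. Qed.

Lemma letter_rank_bounds a : 0 < a.1 ->
  (2 * a.1).-1 <= letter_rank a <= 2 * a.1 /\
  (2 * a.1).-1 <= letter_rank (linv a) <= 2 * a.1.
Proof. by case: a => k [] /=; rewrite /letter_rank /=; lia. Qed.

Lemma rank_orientation a : 0 < a.1 ->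
  letter_rank a < letter_rank (linv a) \/ letter_rank (linv a) < letter_rank a.
Proof. by case: a => k [] /=; rewrite /letter_rank /=; lia. Qed.

Lemma letter_rank_inj a b : 0 < a.1 -> 0 < b.1 -> letter_rank a = letter_rank b -> a = b.
Proof. by case: a b => [i []] [j []]; rewrite /letter_rank /= => *; congr pair; lia. Qed.

Lemma letter_rank_other a y : 0 < y.1 -> y.1 != a ->
  (letter_rank y < (2 * a).-1) || (2 * a < letter_rank y).
Proof. by case: y => j []; rewrite /letter_rank /=; lia. Qed.

Lemma letter_rank_between x y : 0 < x.1 -> 0 < y.1 ->
  minn (letter_rank (linv x)) (letter_rank x) <= letter_rank y <=
  maxn (letter_rank (linv x)) (letter_rank x) -> y = x \/ y = linv x.
Proof.
case: x y => [i []] [j []]; rewrite /letter_rank /linv /= => _ _ hr;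
  rewrite (_ : j = i); try lia; by [left | right].
Qed.

Lemma same_index_letter x y : y.1 = x.1 -> y = x \/ y = linv x.
Proof. by case: x y => [i []] [j []] /= ->; [left | right | right | left]. Qed.

Lemma mul2S j : 2 * j.+1 = 2 * j + 2.
Proof. lia. Qed.

Lemma mul2S_add j k : 2 * j.+1 + k = 2 * j + k.+2.
Proof. lia. Qed.

(* The i-th letter of (t_{k+1} ... t_n)^-1 t_k (t_{k+1} ... t_n), q = n - k. *)
Definition conj_letter (n k q i : nat) : letter :=
  if i < q then Tbar (n - i) else T (k + i - q).

Lemma conj_letter_lt n k q i : i < q -> conj_letter n k q i = Tbar (n - i).
Proof. by rewrite /conj_letter => ->. Qed.

Lemma conj_letter_ge n k q i : q <= i -> conj_letter n k q i = T (k + i - q).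
Proof. by rewrite /conj_letter ltnNge => ->. Qed.

(* Sorted order of a planar word of length m whose i-th letter is W i:
   p is the position of each entry of the Whitehead expansion in the sorted
   order, R its rank in A; p is injective and rank-monotone and both
   families of arcs are non-crossing (an arc separates the two ends of
   another one or none of them). *)
Record planar_config (n m : nat) (W : nat -> letter) (p R : nat -> nat) : Prop := {
  pos_inj : forall i j, i < 2 * m + 2 -> j < 2 * m + 2 -> p i = p j -> i = j;
  pos_mono : forall i j, i < 2 * m + 2 -> j < 2 * m + 2 -> R i < R j -> p i < p j;
  rank_first : R 0 = 0;
  rank_last : R (2 * m + 1) = 2 * n + 1;
  rank_letter : forall i, i < m -> R (2 * i + 1) = letter_rank (W i);
  rank_inverse : forall i, i < m -> R (2 * i + 2) = letter_rank (linv (W i));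
  letter_valid : forall i, i < m -> 0 < (W i).1 <= n;
  letter_reduced : forall i, i.+1 < m -> W i.+1 != linv (W i);
  upper_nested : forall i j, i <= m -> j <= m -> i != j ->
    strictly_between (p (2 * i)) (p (2 * i + 1)) (p (2 * j)) =
    strictly_between (p (2 * i)) (p (2 * i + 1)) (p (2 * j + 1));
  lower_nested : forall i j, i < m -> j < m -> i != j ->
    strictly_between (p (2 * i + 1)) (p (2 * i + 2)) (p (2 * j + 1)) =
    strictly_between (p (2 * i + 1)) (p (2 * i + 2)) (p (2 * j + 2)) }.

(* Min/max-free form of [strictly_between], convenient for linear arithmetic. *)
Lemma strictly_betweenE a b c :
  strictly_between a b c = (a < c < b) || (b < c < a).
Proof. by rewrite /strictly_between; case: (ltngtP a b) => h; lia. Qed.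

Section PlanarConfiguration.

Variables (n m : nat) (W : nat -> letter) (p R : nat -> nat).
Hypothesis cfg : planar_config n m W p R.

Lemma pos_neq a b : a < 2 * m + 2 -> b < 2 * m + 2 -> a != b -> p a != p b.
Proof. by move=> ha hb; apply: contra_neq; exact: (pos_inj cfg ha hb). Qed.

(* Record the order facts between the images of two positions, from their
   ranks (or only their distinctness when the ranks are equal); the final
   configurations are then settled by linear arithmetic. *)
Ltac compare_pair a b :=
  first [ have ? : p a < p b by apply: (pos_mono cfg); lia
        | have ? : p b < p a by apply: (pos_mono cfg); lia
        | have ? : p a != p b by apply: pos_neq; lia ].

Ltac compare_positions l :=
  lazymatch l with
  | ?a :: ?l' =>
      let rec with_a r :=
        lazymatch r with
        | ?b :: ?r' => compare_pair a b; with_a r'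
        | _ => idtac
        end in
      with_a l'; compare_positions l'
  | _ => idtac
  end.

(* Non-crossing of arcs, in a form usable with computed positions. *)
Lemma upper_nestedE i j a b c d : i <= m -> j <= m -> i != j ->
  a = 2 * i -> b = 2 * i + 1 -> c = 2 * j -> d = 2 * j + 1 ->
  strictly_between (p a) (p b) (p c) = strictly_between (p a) (p b) (p d).
Proof. by move=> hi hj hij -> -> -> ->; exact: (upper_nested cfg). Qed.

Lemma lower_nestedE i j a b c d : i < m -> j < m -> i != j ->
  a = 2 * i + 1 -> b = 2 * i + 2 -> c = 2 * j + 1 -> d = 2 * j + 2 ->
  strictly_between (p a) (p b) (p c) = strictly_between (p a) (p b) (p d).
Proof. by move=> hi hj hij -> -> -> ->; exact: (lower_nested cfg). Qed.

Lemma rank_letterE i a : i < m -> a = 2 * i + 1 -> R a = letter_rank (W i).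
Proof. by move=> hi ->; exact: (rank_letter cfg). Qed.

Lemma rank_inverseE i a : i < m -> a = 2 * i + 2 -> R a = letter_rank (linv (W i)).
Proof. by move=> hi ->; exact: (rank_inverse cfg). Qed.

Lemma rank_lastE a : a = 2 * m + 1 -> R a = 2 * n + 1.
Proof. by move->; exact: (rank_last cfg). Qed.

Lemma between_rank a b c : a < 2 * m + 2 -> b < 2 * m + 2 -> c < 2 * m + 2 ->
  strictly_between (p a) (p b) (p c) -> minn (R a) (R b) <= R c <= maxn (R a) (R b).
Proof.
move=> ha hb hc; rewrite /strictly_between => hin.
have := pos_mono cfg ha hc; have := pos_mono cfg hb hc.
have := pos_mono cfg hc ha; have := pos_mono cfg hc hb; lia.
Qed.

Lemma rank_le a : a <= 2 * m -> R a <= 2 * n.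
Proof.
case: a => [|a] am; first by rewrite (rank_first cfg).
have aE := odd_double_half a.
have v : 0 < (W a./2).1 <= n by apply: (letter_valid cfg); case: (odd a) aE => /=; lia.
have := letter_rank_bounds (a := W a./2) ltac:(lia).
case: (odd a) aE => /= aE.
- by rewrite (rank_inverseE (i := a./2)); lia.
- by rewrite (rank_letterE (i := a./2)); lia.
Qed.

Lemma upper_trap_next t j a b c d : j <= t -> t < m ->
  a = 2 * j -> b = 2 * j + 1 -> c = 2 * t + 2 -> d = 2 * t + 3 ->
  strictly_between (p a) (p b) (p c) -> t.+1 < m /\ strictly_between (p a) (p b) (p d).
Proof.
move=> jt tm -> -> -> -> hin.
have hin3 : strictly_between (p (2 * j)) (p (2 * j + 1)) (p (2 * t + 3)).
  by rewrite -(upper_nestedE (i := j) (j := t.+1) (c := 2 * t + 2)) //; lia.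
split=> //; rewrite ltnNge; apply/negP => mt.
have := between_rank _ _ _ hin3; rewrite (rank_lastE (a := 2 * t + 3)); try lia.
by have := rank_le (a := 2 * j); have := rank_le (a := 2 * j + 1); lia.
Qed.

Definition square_trap_right j x := [/\ j.+1 < m, W j = x, W j.+1 = x &
  strictly_between (p (2 * j + 2)) (p (2 * j + 3)) (p (2 * j + 4))].

Lemma square_trap_right_step j x :
  square_trap_right j x -> square_trap_right j.+1 x.
Proof.
case=> jm Wj Wj1 hin4.
have vx : 0 < x.1 <= n by rewrite -Wj; apply: (letter_valid cfg); lia.
have R2 : R (2 * j + 2) = letter_rank (linv x) by rewrite -Wj; apply: rank_inverseE; lia.
have R3 : R (2 * j + 3) = letter_rank x by rewrite -Wj1; apply: rank_letterE; lia.
have R4 : R (2 * j + 4) = letter_rank (linv x) by rewrite -Wj1; apply: rank_inverseE; lia.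
have [jm2 hin5] : j.+2 < m /\ strictly_between (p (2 * j + 2)) (p (2 * j + 3)) (p (2 * j + 5)).
  by apply: (upper_trap_next (t := j.+1) (j := j.+1) _ _ _ _ _ _ hin4); lia.
have := between_rank _ _ _ hin5; rewrite R2 R3 => /(_ ltac:(lia) ltac:(lia) ltac:(lia)) R5_bounds.
have v2 := letter_valid cfg jm2.
have R5 : R (2 * j + 5) = letter_rank (W j.+2) by apply: rank_letterE; lia.
have Wj2 : W j.+2 = x.
  case: (letter_rank_between (x := x) (y := W j.+2) ltac:(lia) ltac:(lia) ltac:(lia)) => // inv.
  by move: (letter_reduced cfg jm2); rewrite Wj1 inv eqxx.
have R6 : R (2 * j + 6) = letter_rank (linv x) by rewrite -Wj2; apply: rank_inverseE; lia.
have L : strictly_between (p (2 * j + 3)) (p (2 * j + 4)) (p (2 * j + 5)) =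
    strictly_between (p (2 * j + 3)) (p (2 * j + 4)) (p (2 * j + 6)).
  by apply: (lower_nestedE (i := j.+1) (j := j.+2)); lia.
rewrite Wj2 in R5.
split; [lia | by [] | by [] |].
rewrite !mul2S_add.
move: hin4 hin5 L; rewrite !strictly_betweenE.
case: (rank_orientation (a := x) ltac:(lia)) => ord;
  compare_positions [:: 2 * j + 2; 2 * j + 3; 2 * j + 4; 2 * j + 5; 2 * j + 6]; lia.
Qed.

(* Moving right forever is impossible in a word of length m. *)
Lemma square_trap_right_absurd j x : ~ square_trap_right j x.
Proof.
move=> trap; have trapped d : square_trap_right (j + d) x.
  by elim: d => [|d IH]; [rewrite addn0 | rewrite addnS; exact: square_trap_right_step].
by case: (trapped m); lia.
Qed.

Definition square_trap_left j x := [/\ j.+1 < m, W j = x, W j.+1 = x &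
  strictly_between (p (2 * j + 2)) (p (2 * j + 3)) (p (2 * j + 1))].

Lemma square_trap_left_step j x :
  square_trap_left j.+1 x -> square_trap_left j x.
Proof.
case=> jm Wj1 Wj2; rewrite !mul2S_add => hin5.
have vx : 0 < x.1 <= n by rewrite -Wj1; apply: (letter_valid cfg); lia.
have R3 : R (2 * j + 3) = letter_rank x by rewrite -Wj1; apply: rank_letterE; lia.
have R4 : R (2 * j + 4) = letter_rank (linv x) by rewrite -Wj1; apply: rank_inverseE; lia.
have R5 : R (2 * j + 5) = letter_rank x by rewrite -Wj2; apply: rank_letterE; lia.
have hin2 : strictly_between (p (2 * j + 4)) (p (2 * j + 5)) (p (2 * j + 2)).
  by rewrite (upper_nestedE (i := j.+2) (j := j.+1) (d := 2 * j + 3)) //; lia.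
have := between_rank _ _ _ hin2; rewrite R4 R5 => /(_ ltac:(lia) ltac:(lia) ltac:(lia)) R2_bounds.
have vj : 0 < (W j).1 <= n by apply: (letter_valid cfg); lia.
have R2 : R (2 * j + 2) = letter_rank (linv (W j)) by apply: rank_inverseE; lia.
have Wj : W j = x.
  have v' : 0 < (linv (W j)).1 by case/andP: vj.
  case: (letter_rank_between (x := x) (y := linv (W j)) ltac:(lia) v' ltac:(lia)) => inv.
  - by move: (letter_reduced cfg (i := j) ltac:(lia)); rewrite Wj1 inv eqxx.
  - by rewrite -[W j]linvK inv linvK.
have R1 : R (2 * j + 1) = letter_rank x by rewrite -Wj; apply: rank_letterE; lia.
rewrite Wj in R2.
have L : strictly_between (p (2 * j + 1)) (p (2 * j + 2)) (p (2 * j + 3)) =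
    strictly_between (p (2 * j + 1)) (p (2 * j + 2)) (p (2 * j + 4)).
  by apply: (lower_nestedE (i := j) (j := j.+1)); lia.
split; [lia | by [] | by [] |].
move: hin5 hin2 L; rewrite !strictly_betweenE.
case: (rank_orientation (a := x) ltac:(lia)) => ord;
  compare_positions [:: 2 * j + 1; 2 * j + 2; 2 * j + 3; 2 * j + 4; 2 * j + 5]; lia.
Qed.

(* At the first letter the trap would contain zbar_1, of rank 0. *)
Lemma square_trap_left_absurd j x : ~ square_trap_left j x.
Proof.
elim: j => [|j IH]; last by move/square_trap_left_step.
case=> m_gt1 W0 W1 hin1.
have vx : 0 < x.1 <= n by rewrite -W0; apply: (letter_valid cfg); lia.
have [bx bx'] := letter_rank_bounds (a := x) ltac:(lia).
have R2 : R 2 = letter_rank (linv x) by rewrite -W0; apply: rank_inverseE; lia.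
have R3 : R 3 = letter_rank x by rewrite -W1; apply: rank_letterE; lia.
have hin0 : strictly_between (p 2) (p 3) (p 0).
  by rewrite (upper_nestedE (i := 1) (j := 0) (d := 1)) //; lia.
have := between_rank _ _ _ hin0; rewrite R2 R3 (rank_first cfg); lia.
Qed.

(* Part (i): a square x x traps its right or its left continuation,
   according to how the lower arcs of its two letters are nested. *)
Lemma config_squarefree i : i.+1 < m -> W i.+1 != W i.
Proof.
move=> im; apply/eqP => Wsq; set x := W i in Wsq.
have vx : 0 < x.1 <= n by apply: (letter_valid cfg); lia.
have R1 : R (2 * i + 1) = letter_rank x by apply: rank_letterE; lia.
have R2 : R (2 * i + 2) = letter_rank (linv x) by apply: rank_inverseE; lia.
have R3 : R (2 * i + 3) = letter_rank x by rewrite -Wsq; apply: rank_letterE; lia.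
have R4 : R (2 * i + 4) = letter_rank (linv x) by rewrite -Wsq; apply: rank_inverseE; lia.
have L : strictly_between (p (2 * i + 1)) (p (2 * i + 2)) (p (2 * i + 3)) =
    strictly_between (p (2 * i + 1)) (p (2 * i + 2)) (p (2 * i + 4)).
  by apply: (lower_nestedE (i := i) (j := i.+1)); lia.
have [hr|hl] : strictly_between (p (2 * i + 2)) (p (2 * i + 3)) (p (2 * i + 4)) \/
               strictly_between (p (2 * i + 2)) (p (2 * i + 3)) (p (2 * i + 1)).
  move: L; rewrite !strictly_betweenE.
  case: (rank_orientation (a := x) ltac:(lia)) => ord;
    compare_positions [:: 2 * i + 1; 2 * i + 2; 2 * i + 3; 2 * i + 4]; lia.
- exact: (@square_trap_right_absurd i x).
- exact: (@square_trap_left_absurd i x).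
Qed.

(* Consecutive letters involve different generators (squarefree and
   reduced). *)
Lemma next_index_differs t : t.+1 < m -> (W t.+1).1 != (W t).1.
Proof.
move=> tm; apply/eqP => /same_index_letter [same|inv].
- by move: (config_squarefree tm); rewrite same eqxx.
- by move: (letter_reduced cfg tm); rewrite inv eqxx.
Qed.

Section AscendingPrefix.

Variable k : nat.
Hypotheses (k_pos : 0 < k) (k_le_n : k <= n) (k_le_m : k <= m).
Hypotheses (W_ascending : forall i, i < k.-1 -> W i = T i.+1) (W_turn : W k.-1 = Tbar k).

Lemma ascending_rank_even j : j < k -> R (2 * j) = 2 * j.
Proof.
case: j => [|i] ik; first exact: (rank_first cfg).
rewrite (rank_inverseE (i := i)) ?W_ascending // /letter_rank /=; lia.
Qed.

Lemma ascending_rank_odd j : j < k.-1 -> R (2 * j + 1) = 2 * j + 1.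
Proof. by move=> jk; rewrite (rank_letterE (i := j)) ?W_ascending // /letter_rank /=; lia. Qed.

Lemma tbar_turn_rank_odd : R (2 * k.-1 + 1) = 2 * k.
Proof. by rewrite (rank_letterE (i := k.-1)) ?W_turn // /letter_rank /=; lia. Qed.

Lemma tbar_turn_rank_even : R (2 * k.-1 + 2) = (2 * k).-1.
Proof. by rewrite (rank_inverseE (i := k.-1)) ?W_turn // /letter_rank /=; lia. Qed.

Lemma ascending_rank_odd_bounds j : j < k -> 2 * j + 1 <= R (2 * j + 1) <= 2 * j + 2.
Proof.
move=> jk; case: (ltnP j k.-1) => jk'; first by rewrite ascending_rank_odd //; lia.
by rewrite (_ : j = k.-1) ?tbar_turn_rank_odd; lia.
Qed.

Definition tbar_trap t j := [/\ j < k, k.-1 <= t, t < m, W t = Tbar j.+1 &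
  strictly_between (p (2 * j)) (p (2 * j + 1)) (p (2 * t + 2))].

(* The letter tbar_k itself starts the walk: its inverse t_k has rank 2k-1,
   between the ranks 2k-2 and 2k of the arc {2k-2, 2k-1}. *)
Lemma tbar_trap_start : tbar_trap k.-1 k.-1.
Proof.
split; rewrite ?prednK //; try lia.
have R0 := ascending_rank_even (j := k.-1) ltac:(lia).
have R1 := tbar_turn_rank_odd; have R2 := tbar_turn_rank_even.
rewrite strictly_betweenE.
compare_positions [:: 2 * k.-1; 2 * k.-1 + 1; 2 * k.-1 + 2]; lia.
Qed.

(* Inside the arc {0, 1} no letter other than t_1^(+-1) fits. *)
Lemma tbar_trap_first t : ~ tbar_trap t 0.
Proof.
case=> _ kt tm Wt hin.
have [tm1 hin3] : t.+1 < m /\ strictly_between (p 0) (p 1) (p (2 * t + 3)).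
  by apply: (upper_trap_next (t := t) (j := 0) _ _ _ _ _ _ hin); lia.
have R1 : 1 <= R 1 <= 2 by exact: (ascending_rank_odd_bounds (j := 0) k_pos).
have v := letter_valid cfg tm1.
have R3 : R (2 * t + 3) = letter_rank (W t.+1) by apply: rank_letterE; lia.
have := letter_rank_bounds (a := W t.+1) ltac:(lia).
have := next_index_differs tm1; rewrite Wt /= => nd.
have := letter_rank_other (a := 1) (y := W t.+1) ltac:(lia) nd.
have := between_rank _ _ _ hin3; rewrite (rank_first cfg); lia.
Qed.

Lemma tbar_trap_step t j : tbar_trap t j.+1 -> tbar_trap t.+1 j.
Proof.
case=> jk kt tm Wt; rewrite !mul2S_add mul2S => hin.
have [tm1 hin3] : t.+1 < m /\ strictly_between (p (2 * j + 2)) (p (2 * j + 3)) (p (2 * t + 3)).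
  by apply: (upper_trap_next (t := t) (j := j.+1) _ _ _ _ _ _ hin); lia.
have R2 : R (2 * j + 2) = 2 * j + 2 by rewrite -mul2S ascending_rank_even.
have R3 := ascending_rank_odd_bounds (j := j.+1) jk; rewrite mul2S_add in R3.
have R0 := ascending_rank_even (j := j) ltac:(lia).
have R1 := ascending_rank_odd (j := j) ltac:(lia).
have := between_rank _ _ _ hin3; rewrite R2 => /(_ ltac:(lia) ltac:(lia) ltac:(lia)) R5_bounds.
have v := letter_valid cfg tm1.
have := next_index_differs tm1; rewrite Wt /= => nd.
have far := letter_rank_other (a := j.+2) (y := W t.+1) ltac:(lia) nd.
have R5_letter : R (2 * t + 3) = letter_rank (W t.+1) by apply: rank_letterE; lia.
have Wt1 : W t.+1 = Tbar j.+1.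
  apply: letter_rank_inj; [lia | by [] | rewrite [RHS]/letter_rank /=; lia].
have R6 : R (2 * t + 4) = 2 * j + 1.
  by rewrite (rank_inverseE (i := t.+1)) ?Wt1 // /letter_rank /=; lia.
have R5 : R (2 * t + 3) = 2 * j + 2.
  by rewrite (rank_letterE (i := t.+1)) ?Wt1 // /letter_rank /=; lia.
have L : strictly_between (p (2 * j + 1)) (p (2 * j + 2)) (p (2 * t + 3)) =
    strictly_between (p (2 * j + 1)) (p (2 * j + 2)) (p (2 * t + 4)).
  by apply: (lower_nestedE (i := j) (j := t.+1)); lia.
split; [lia | lia | by [] | by [] |].
rewrite mul2S_add; move: hin3 L; rewrite !strictly_betweenE.
compare_positions [:: 2 * j; 2 * j + 1; 2 * j + 2; 2 * j + 3; 2 * t + 3; 2 * t + 4]; lia.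
Qed.

Lemma ascending_prefix_absurd : False.
Proof.
have absurd j t : ~ tbar_trap t j.
  by elim: j t => [|j IH] t; [exact: tbar_trap_first | move/tbar_trap_step/IH].
exact: absurd tbar_trap_start.
Qed.

End AscendingPrefix.

Section ConjugatePrefix.

Variables k q : nat.
Hypotheses (k_pos : 0 < k) (kq_n : k + q = n) (q_lt_m : q < m).
Hypotheses (W_descending : forall i, i < q -> W i = Tbar (n - i)) (W_turn : W q = T k).

Lemma descending_rank l : 0 < l <= 2 * q -> R l = 2 * n + 1 - l.
Proof.
case: l => [|l] // lq; have lE := odd_double_half l.
case: (odd l) lE => /= lE.
- by rewrite (rank_inverseE (i := l./2)) ?W_descending // /letter_rank /=; lia.
- by rewrite (rank_letterE (i := l./2)) ?W_descending // /letter_rank /=; lia.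
Qed.

Lemma conj_turn_rank_odd : R (2 * q + 1) = (2 * k).-1.
Proof. by rewrite (rank_letterE (i := q)) ?W_turn // /letter_rank /=. Qed.

Lemma conj_turn_rank_even : R (2 * q + 2) = 2 * k.
Proof. by rewrite (rank_inverseE (i := q)) ?W_turn // /letter_rank /=. Qed.

Definition conj_trapped e t :=
  if e == 0 then p 1 < p (2 * t)
  else strictly_between (p (2 * e)) (p (2 * e + 1)) (p (2 * t)).

Definition conj_trap t := [/\ q < t <= m, t <= 2 * q + 1,
  forall i, i < t -> W i = conj_letter n k q i & conj_trapped (2 * q + 1 - t) t].

Lemma conj_trap_start : conj_trap q.+1.
Proof.
split; try lia.
  move=> i; rewrite ltnS leq_eqVlt => /predU1P [->|iq].
  - by rewrite W_turn conj_letter_ge // addnK.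
  - by rewrite W_descending // conj_letter_lt.
rewrite /conj_trapped (_ : 2 * q + 1 - q.+1 = q) ?mul2S; last lia.
case: eqP => [q0 | q_pos].
- have R1 : R 1 = (2 * k).-1 by rewrite -conj_turn_rank_odd q0.
  have R2 : R 2 = 2 * k by rewrite -conj_turn_rank_even q0.
  by rewrite q0; change (p 1 < p 2); apply: (pos_mono cfg); lia.
- have R1 := conj_turn_rank_odd; have R2 := conj_turn_rank_even.
  have R0 : R (2 * q) = 2 * n + 1 - 2 * q by apply: descending_rank; lia.
  rewrite strictly_betweenE.
  compare_positions [:: 2 * q; 2 * q + 1; 2 * q + 2]; lia.
Qed.

Lemma conj_trap_step t : conj_trap t -> t < 2 * q + 1 -> conj_trap t.+1.
Proof.
case=> /andP [qt tm] t2q Wpre + t2q'.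
rewrite /conj_trapped; case E: (2 * q + 1 - t) => [|e] //=; first lia.
rewrite mul2S_add mul2S => hin.
have Wprev : W t.-1 = T (n - e.+1).
  rewrite Wpre; last lia.
  by rewrite conj_letter_ge; [congr T|]; lia.
have [tm1 hin1] : t.-1.+1 < m /\
    strictly_between (p (2 * e + 2)) (p (2 * e + 3)) (p (2 * t + 1)).
  by apply: (upper_trap_next (t := t.-1) (j := e.+1) _ _ _ _ _ _ hin); lia.
have R2 : R (2 * e + 2) = 2 * n + 1 - (2 * e + 2) by apply: descending_rank; lia.
have R3 : 2 * n - (2 * e + 3) <= R (2 * e + 3) <= 2 * n + 1 - (2 * e + 3).
  case: (ltnP (2 * e + 3) (2 * q + 1)) => l; first by rewrite descending_rank; lia.
  by rewrite (_ : 2 * e + 3 = 2 * q + 1) ?conj_turn_rank_odd; lia.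
have Wt : W t = T (n - e).
  have := between_rank _ _ _ hin1; rewrite R2 => /(_ ltac:(lia) ltac:(lia) ltac:(lia)) R5_bounds.
  have v := letter_valid cfg (i := t) ltac:(lia).
  have := next_index_differs (t := t.-1) ltac:(lia); rewrite prednK; last lia.
  rewrite Wprev /= => nd.
  have far := letter_rank_other (a := n - e.+1) (y := W t) ltac:(lia) nd.
  have R5_letter : R (2 * t + 1) = letter_rank (W t) by apply: rank_letterE; lia.
  apply: letter_rank_inj; [lia | rewrite /=; lia | rewrite [RHS]/letter_rank /=; lia].
have R6 : R (2 * t + 1) = (2 * (n - e)).-1 by rewrite (rank_letterE (i := t)) ?Wt //; lia.
have R7 : R (2 * t + 2) = 2 * (n - e) by rewrite (rank_inverseE (i := t)) ?Wt //; lia.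
have R1 : R (2 * e + 1) = 2 * n + 1 - (2 * e + 1) by apply: descending_rank; lia.
have L : strictly_between (p (2 * e + 1)) (p (2 * e + 2)) (p (2 * t + 1)) =
    strictly_between (p (2 * e + 1)) (p (2 * e + 2)) (p (2 * t + 2)).
  by apply: (lower_nestedE (i := e) (j := t)); lia.
have past_arc : p (2 * e + 1) < p (2 * t + 2).
  move: hin1 L; rewrite !strictly_betweenE.
  compare_positions [:: 2 * e + 1; 2 * e + 2; 2 * e + 3; 2 * t + 1; 2 * t + 2]; lia.
split; [lia | lia | |].
  move=> i; rewrite ltnS leq_eqVlt => /predU1P [->|it]; last exact: Wpre.
  by rewrite Wt conj_letter_ge; [congr T|]; lia.
rewrite /conj_trapped (_ : 2 * q + 1 - t.+1 = e) ?mul2S; last lia.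
case: eqP => [e0 | e_pos]; first by move: past_arc; rewrite e0.
have R0 : R (2 * e) = 2 * n + 1 - 2 * e by apply: descending_rank; lia.
rewrite strictly_betweenE.
compare_positions [:: 2 * e; 2 * e + 1; 2 * t + 2]; lia.
Qed.

(* After 2q+1 letters the word must stop: a further letter would have rank
   below that of position 1 and fall inside the arc {0, 1}. *)
Lemma conj_trap_last : conj_trap (2 * q + 1) -> m = 2 * q + 1.
Proof.
case=> /andP [_ tm] _ Wpre; rewrite /conj_trapped subnn eqxx => beyond.
apply/eqP; rewrite eqn_leq tm andbT leqNgt; apply/negP => tm1.
have Wlast : W (2 * q) = T n.
  by rewrite Wpre ?conj_letter_ge; [congr T | |]; lia.
have := next_index_differs (t := 2 * q) ltac:(lia); rewrite Wlast /= => nd.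
have v := letter_valid cfg (i := (2 * q).+1) ltac:(lia).
have far := letter_rank_other (a := n) (y := W (2 * q).+1) ltac:(lia) nd.
have bnd := letter_rank_bounds (a := W (2 * q).+1) ltac:(lia).
have Rt : R (2 * (2 * q + 1) + 1) = letter_rank (W (2 * q).+1) by apply: rank_letterE; lia.
have R1 : (2 * n).-1 <= R 1.
  case: (posnP q) => [q0 | q_pos]; last by rewrite descending_rank; lia.
  have Rq : R 1 = (2 * k).-1 by rewrite -conj_turn_rank_odd q0.
  lia.
have R0 := rank_first cfg.
have U : strictly_between (p 0) (p 1) (p (2 * (2 * q + 1))) =
    strictly_between (p 0) (p 1) (p (2 * (2 * q + 1) + 1)).
  by apply: (upper_nestedE (i := 0) (j := 2 * q + 1)); lia.
move: U; rewrite !strictly_betweenE.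
compare_positions [:: 0; 1; 2 * (2 * q + 1) + 1]; lia.
Qed.

Lemma conj_prefix_forced : m = 2 * q + 1 /\ forall i, i < m -> W i = conj_letter n k q i.
Proof.
have trap d : d <= q -> conj_trap (q.+1 + d).
  elim: d => [|d IH] dq; first by rewrite addn0; exact: conj_trap_start.
  by rewrite addnS; apply: conj_trap_step; [apply: IH | ]; lia.
have := trap q (leqnn q); rewrite (_ : q.+1 + q = 2 * q + 1); last lia.
move=> last_trap; have mE := conj_trap_last last_trap.
by case: last_trap => _ _ Wpre _; split=> // i; rewrite mE; exact: Wpre.
Qed.

End ConjugatePrefix.

End PlanarConfiguration.

Lemma whitehead_size w : size (whitehead w) = 2 * size w + 2.
Proof. by elim: w => // a w; rewrite /whitehead /= => IH; lia. Qed.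

Lemma nth_whitehead_shift a w j :
  nth Z1 (whitehead (a :: w)) j.+3 = nth Z1 (whitehead w) j.+1.
Proof. by []. Qed.

Lemma nth_whitehead_letter w i : i < size w ->
  nth Z1 (whitehead w) (2 * i + 1) = Lt (nth (0, false) w i) /\
  nth Z1 (whitehead w) (2 * i + 2) = Lt (linv (nth (0, false) w i)).
Proof.
elim: w i => // a w IH [|i] iw; first by [].
rewrite !mul2S_add addn3 addn4 !nth_whitehead_shift.
by rewrite -[(2 * i).+2]addn2 -[(2 * i).+1]addn1; exact: (IH i iw).
Qed.

Lemma nth_whitehead_last w : nth Z1 (whitehead w) (2 * size w + 1) = Z1.
Proof.
elim: w => // a w IH.
by rewrite [size _]/= mul2S_add addn3 nth_whitehead_shift -[(2 * size w).+1]addn1.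
Qed.

Lemma reduced_nth w i : reduced w -> i.+1 < size w ->
  nth (0, false) w i.+1 != linv (nth (0, false) w i).
Proof. by case: w => // a w red im; exact: (pathP (0, false) red i im). Qed.

Lemma planar_word_config n w : all (valid_letter n) w -> reduced w -> planar_word n w ->
  exists p R, planar_config n (size w) (fun i => nth (0, false) w i) p R.
Proof.
move=> valid red; rewrite /planar_word /planar whitehead_size.
rewrite (_ : (2 * size w + 2)./2 = (size w).+1); last lia.
case=> _ [s [perm_s mono_s upper_s lower_s]].
have ssz : size s = 2 * size w + 2 by rewrite (perm_size perm_s) size_iota.
have s_uniq : uniq s by rewrite (perm_uniq perm_s) iota_uniq.
exists (nth 0 s), (fun i => sym_rank n (nth Z1 (whitehead w) i)).
have inj i j : i < 2 * size w + 2 -> j < 2 * size w + 2 -> nth 0 s i = nth 0 s j -> i = j.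
  by move=> hi hj /eqP; rewrite nth_uniq ?ssz // => /eqP.
split => //.
- move=> i j hi hj Rij; case: (ltngtP (nth 0 s i) (nth 0 s j)) => // [gt | eq].
  + by move: (mono_s j i hj hi gt); rewrite /sym_le leqNgt Rij.
  + by move: Rij; rewrite (inj i j hi hj eq) ltnn.
- by rewrite nth_whitehead_last /=; lia.
- by move=> i im; case: (nth_whitehead_letter im) => -> _; rewrite sym_rank_Lt.
- by move=> i im; case: (nth_whitehead_letter im) => _ ->; rewrite sym_rank_Lt.
- by move=> i im; move/all_nthP: valid => /(_ (0, false) i im).
- by move=> i; exact: reduced_nth.
- by move=> i j im jm ij; case/andP: (upper_s i j im jm ij) => _ /eqP; rewrite !addn1.
- by move=> i j im jm ij; case/andP: (lower_s i j im jm ij) => _ /eqP; rewrite !addn1 !addn2.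
Qed.

Lemma prefix_rcons_nth (s w : seq letter) a : prefix (rcons s a) w ->
  [/\ size s < size w, nth (0, false) w (size s) = a &
      forall i, i < size s -> nth (0, false) w i = nth (0, false) s i].
Proof.
case/prefixP => r ->; rewrite size_cat size_rcons; split; first lia.
- by rewrite nth_cat size_rcons ltnSn nth_rcons ltnn eqxx.
- by move=> i ilt; rewrite nth_cat size_rcons ltnS ltnW // nth_rcons ilt.
Qed.

Lemma size_t_upto k : size (t_upto k) = k.-1.
Proof. by rewrite size_map size_iota. Qed.

Lemma nth_t_upto k i : i < k.-1 -> nth (0, false) (t_upto k) i = T i.+1.
Proof. by move=> ik; rewrite (nth_map 0) ?size_iota // nth_iota // add1n. Qed.

Lemma size_tbar_down n k : size (tbar_down n k) = n - k.
Proof. by rewrite size_map size_rev size_iota. Qed.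

Lemma nth_tbar_down n k i : i < n - k -> nth (0, false) (tbar_down n k) i = Tbar (n - i).
Proof.
move=> ik; rewrite (nth_map 0) ?size_rev ?size_iota // nth_rev ?size_iota //.
by rewrite nth_iota; [congr Tbar|]; lia.
Qed.

Lemma size_t_up n k : size (t_up n k) = n - k.
Proof. by rewrite size_map size_iota. Qed.

Lemma nth_t_up n k i : i < n - k -> nth (0, false) (t_up n k) i = T (k.+1 + i).
Proof. by move=> ik; rewrite (nth_map 0) ?size_iota // nth_iota. Qed.

Lemma nth_conjugate_word n k i : i <= 2 * (n - k) ->
  nth (0, false) (tbar_down n k ++ T k :: t_up n k) i = conj_letter n k (n - k) i.
Proof.
move=> ik; rewrite nth_cat size_tbar_down /conj_letter.
case: ltnP => [iq | qi]; first exact: nth_tbar_down.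
case: (posnP (i - (n - k))) => [e0 | e_pos].
- by rewrite e0 /=; congr T; lia.
- by rewrite -(prednK e_pos) /= nth_t_up; [congr T|]; lia.
Qed.

Lemma planar_squarefree n w :
  all (valid_letter n) w -> reduced w -> planar_word n w -> squarefree w.
Proof.
move=> valid red planar i im; have [p [R cfg]] := planar_word_config valid red planar.
by rewrite eq_sym; exact: (config_squarefree cfg im).
Qed.

Lemma planar_conjugate_prefix n k w :
  all (valid_letter n) w -> reduced w -> planar_word n w -> 0 < k <= n ->
  prefix (rcons (tbar_down n k) (T k)) w -> w = tbar_down n k ++ T k :: t_up n k.
Proof.
move=> valid red planar /andP [k_pos k_le_n] /prefix_rcons_nth [qw Wturn Wpre].
have [p [R cfg]] := planar_word_config valid red planar.
rewrite size_tbar_down in qw Wturn Wpre.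
have Wdesc i : i < n - k -> nth (0, false) w i = Tbar (n - i).
  by move=> iq; rewrite Wpre // nth_tbar_down.
have [wE Wforced] := conj_prefix_forced cfg k_pos (subnKC k_le_n) qw Wdesc Wturn.
apply: (eq_from_nth (x0 := (0, false))) => [|i iw].
  by rewrite size_cat /= size_tbar_down size_t_up wE; lia.
by rewrite Wforced // nth_conjugate_word //; move: iw; rewrite wE; lia.
Qed.

Lemma planar_no_ascending_prefix n k w :
  all (valid_letter n) w -> reduced w -> planar_word n w -> 0 < k <= n ->
  ~ prefix (rcons (t_upto k) (Tbar k)) w.
Proof.
move=> valid red planar /andP [k_pos k_le_n] /prefix_rcons_nth [kw Wturn Wpre].
have [p [R cfg]] := planar_word_config valid red planar.
rewrite size_t_upto in kw Wturn Wpre.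
have Wasc i : i < k.-1 -> nth (0, false) w i = T i.+1.
  by move=> ik; rewrite Wpre // nth_t_upto.
exact: (ascending_prefix_absurd cfg k_pos k_le_n ltac:(lia) Wasc Wturn).
Qed.

Theorem propositionA (n k : nat) (w : seq letter) :
  all (valid_letter n) w -> reduced w -> planar_word n w ->
  1 <= k <= n ->
  [/\ squarefree w,
      ~ (prefix (rcons (tbar_down n k) (T k)) w /\
         w <> tbar_down n k ++ T k :: t_up n k) &
      ~ prefix (rcons (t_upto k) (Tbar k)) w].
Proof.
move=> valid red planar kn; split.
- exact: planar_squarefree valid red planar.
- by case=> pre; apply; exact: planar_conjugate_prefix valid red planar kn pre.
- exact: planar_no_ascending_prefix valid red planar kn.
Qed.
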